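(* For all $k,l\in\mathbb{Z}$ and all $0<\xi<1$, $s_{k,l}(\xi)>0$.
   Context: For $0<\xi<1$ let $\mu_\xi(\varphi):=\xi^{-2}+(1-\xi^{-2})\cos\varphi$ and define $s_{k,l}(\xi):=\int_0^{2\pi}\int_0^{2\pi}\frac{e^{-ik\varphi}e^{-il\eta}}{(\mu_\xi(\varphi)-\cos\eta)^{1/2}}\,d\eta\,d\varphi$ for $k,l\in\mathbb{Z}$. *)

From Stdlib Require Import Reals Lra ZArith.
Open Scope R_scope.

Definition mu (xi phi : R) : R := / (xi ^ 2) + (1 - / (xi ^ 2)) * cos phi.

(* e^{-ik phi} e^{-il eta} = cos(k phi + l eta) - i sin(k phi + l eta);
   real and imaginary parts of the integrand of s_{k,l}(xi). *)
Definition integrand_re (k l : Z) (xi phi eta : R) : R :=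
  cos (IZR k * phi + IZR l * eta) / sqrt (mu xi phi - cos eta).
Definition integrand_im (k l : Z) (xi phi eta : R) : R :=
  - sin (IZR k * phi + IZR l * eta) / sqrt (mu xi phi - cos eta).

Definition is_RInt (f : R -> R) (a b v : R) : Prop :=
  exists pr : Riemann_integrable f a b, RiemannInt pr = v.

(* Iterated integral  int_0^{2pi} int_0^{2pi} F phi eta d eta d phi = v,
   where the inner integral is a proper Riemann integral for each
   phi in (0, 2pi) and the outer one is improper at both endpoints
   (the integrand of s_{k,l} is singular only at phi = eta = 0 mod 2pi). *)
Definition iter_int (F : R -> R -> R) (v : R) : Prop :=
  exists I : R -> R,
    (forall phi, 0 < phi < 2 * PI -> is_RInt (F phi) 0 (2 * PI) (I phi)) /\
    (forall eps, 0 < eps ->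
       exists delta, 0 < delta /\
         forall a b, 0 < a < delta -> 0 < 2 * PI - b < delta ->
           exists J, is_RInt I a b J /\ Rabs (J - v) < eps).

(* For phi <> 0 (mod 2 PI) one has mu(phi) > 1, so expanding in powers of
   cos eta / mu(phi) gives
     (mu(phi) - cos eta)^(-1/2) = sum_n c_n mu(phi)^(-n-1/2) cos^n eta,
   c_n = C(2n, n) / 4^n, and hence
     s_(k,l) = sum_n c_n E_n(l) int_0^(2 PI) cos(k phi) mu(phi)^(-n-1/2) d phi,
   with E_n(l) = int_0^(2 PI) cos(l eta) cos^n eta d eta.  The recursion
   E_(n+1)(l) = (E_n(l+1) + E_n(l-1)) / 2 shows E_n(l) >= 0 and E_|l|(l) > 0.
   Since mu = xi^(-2) (1 - (1 - xi^2) cos phi), both 1/mu and mu^(-1/2) are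
   power series in cos phi with positive coefficients, so the same moment
   argument makes every phi-integral positive.  The terms with sin vanish by
   the symmetry t -> 2 PI - t.  Exchanging the series with the improper outer
   integral is justified by a Tannery-type argument: c_n, E_n(l) and
   int mu^(-n-1/2) are all O(n^(-1/2)), so the series is dominated by
   sum n^(-3/2). *)

From Pilot Require Import Defs.
From Stdlib Require Import Reals ZArith Lra Lia Psatz.
From Coquelicot Require Import Coquelicot.
Open Scope R_scope.

(* Coquelicot states many equalities in an algebraic structure over R, where
   [ring] does not apply. *)
Ltac eq_in_R := match goal with |- @eq _ ?a ?b => change (@eq R a b) end.

(** * Series and termwise integration *)

Lemma sum_n_S (a : nat -> R) n : sum_n a (S n) = sum_n a n + a (S n).
Proof. now rewrite sum_Sn. Qed.

Lemma sum_n_le (u v : nat -> R) N : (forall n, u n <= v n) -> sum_n u N <= sum_n v N.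
Proof.
  intros H. induction N; [rewrite !sum_O; auto|].
  rewrite !sum_n_S. specialize (H (S N)). lra.
Qed.

Lemma sum_n_nonneg (u : nat -> R) N : (forall n, 0 <= u n) -> 0 <= sum_n u N.
Proof.
  intros H. induction N; [rewrite sum_O; auto|].
  rewrite sum_n_S. specialize (H (S N)). lra.
Qed.

Lemma sum_n_abs (u : nat -> R) N : Rabs (sum_n u N) <= sum_n (fun n => Rabs (u n)) N.
Proof.
  induction N; [rewrite !sum_O; lra|].
  rewrite !sum_n_S. pose proof (Rabs_triang (sum_n u N) (u (S N))). lra.
Qed.

Lemma sum_n_mult_r (u : nat -> R) c N : sum_n (fun n => u n * c) N = sum_n u N * c.
Proof. induction N; [now rewrite !sum_O|]. rewrite !sum_n_S, IHN. eq_in_R; ring. Qed.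

Lemma sum_n_ge_term (a : nat -> R) j N :
  (forall n, 0 <= a n) -> (j <= N)%nat -> a j <= sum_n a N.
Proof.
  intros Ha HjN. induction HjN as [|N _ IH].
  - destruct j; [rewrite sum_O; lra|].
    rewrite sum_n_S. pose proof (sum_n_nonneg a j Ha). lra.
  - rewrite sum_n_S. specialize (Ha (S N)). lra.
Qed.

Lemma Series_ge_term (a : nat -> R) j :
  (forall n, 0 <= a n) -> ex_series a -> a j <= Series a.
Proof.
  intros Ha He.
  apply (is_lim_seq_le_loc (fun _ => a j) (sum_n a) (a j) (Series a)).
  - exists j. intros N HN. now apply sum_n_ge_term.
  - apply is_lim_seq_const.
  - now apply Series_correct.
Qed.

Lemma Series_sub_sum_n_lt (a : nat -> R) : ex_series a ->
  forall eps, 0 < eps -> exists N0, forall N, (N0 <= N)%nat -> Rabs (Series a - sum_n a N) < eps.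
Proof.
  intros Ha eps Heps. apply Series_correct in Ha. apply (is_lim_seq_spec _ (Series a)) in Ha.
  destruct (Ha (mkposreal eps Heps)) as [N0 HN0]. exists N0. intros N HN.
  rewrite Rabs_minus_sym. apply HN0. lia.
Qed.

Lemma is_lim_seq_sum_n_shift (a : nat -> R) N :
  ex_series a -> is_lim_seq (fun j => sum_n a (N + j)) (Series a).
Proof.
  intros Ha. apply is_lim_seq_ext with (fun j => sum_n a (j + N)).
  { intros j. f_equal. lia. }
  apply (is_lim_seq_incr_n (sum_n a) N). now apply Series_correct.
Qed.

Lemma Series_tail_le (a M : nat -> R) N :
  (forall n, Rabs (a n) <= M n) -> ex_series M ->
  ex_series a /\ Rabs (Series a - sum_n a N) <= Series M - sum_n M N.
Proof.
  intros Ha HM.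
  assert (Hea : ex_series a) by (apply (ex_series_le a M); auto).
  split; [exact Hea|].
  assert (Hpartial : forall j,
    Rabs (sum_n a (N + j) - sum_n a N) <= sum_n M (N + j) - sum_n M N).
  { induction j.
    - rewrite Nat.add_0_r, Rminus_diag, Rabs_R0. lra.
    - rewrite Nat.add_succ_r, !sum_n_S.
      pose proof (Ha (S (N + j))).
      pose proof (Rabs_triang (sum_n a (N + j) - sum_n a N) (a (S (N + j)))).
      replace (sum_n a (N + j) + a (S (N + j)) - sum_n a N)
        with (sum_n a (N + j) - sum_n a N + a (S (N + j))) by ring.
      lra. }
  apply (is_lim_seq_le _ _ (Rabs (Series a - sum_n a N)) (Series M - sum_n M N) Hpartial).
  - apply (is_lim_seq_abs _ (Series a - sum_n a N)).
    apply (is_lim_seq_minus _ _ (Series a) (sum_n a N));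
      [now apply is_lim_seq_sum_n_shift | apply is_lim_seq_const | reflexivity].
  - apply (is_lim_seq_minus _ _ (Series M) (sum_n M N));
      [now apply is_lim_seq_sum_n_shift | apply is_lim_seq_const | reflexivity].
Qed.

Lemma ex_series_scal_l_R (c : R) (a : nat -> R) : ex_series a -> ex_series (fun n => c * a n).
Proof. intros [l Hl]. exists (c * l). exact (is_series_scal_l (V := R_NormedModule) c a l Hl). Qed.

Lemma ex_series_bounded_sum (a : nat -> R) M :
  (forall n, 0 <= a n) -> (forall N, sum_n a N <= M) -> ex_series a.
Proof.
  intros Ha HM. destruct (ex_finite_lim_seq_incr (sum_n a) M) as [l Hl].
  - intros n. rewrite sum_n_S. specialize (Ha (S n)). lra.
  - exact HM.
  - now exists l.
Qed.

Lemma ex_RInt_of_continuous (f : R -> R) a b : (forall z, continuous f z) -> ex_RInt f a b.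
Proof. intros H. apply (ex_RInt_continuous (V := R_CompleteNormedModule)). auto. Qed.

Lemma continuous_of_ex_derive (f : R -> R) x : ex_derive f x -> continuous f x.
Proof. exact (ex_derive_continuous (K := R_AbsRing) (V := R_NormedModule) f x). Qed.

Lemma continuous_mult_R (f g : R -> R) x :
  continuous f x -> continuous g x -> continuous (fun y => f y * g y) x.
Proof. exact (continuous_mult (K := R_AbsRing) f g x). Qed.

Lemma is_RInt_derive_R (F f : R -> R) a b :
  (forall x, Rmin a b <= x <= Rmax a b -> is_derive F x (f x)) ->
  (forall x, Rmin a b <= x <= Rmax a b -> continuous f x) -> is_RInt f a b (F b - F a).
Proof. exact (is_RInt_derive (V := R_CompleteNormedModule) F f a b). Qed.

Lemma is_RInt_sum_n (a : nat -> R -> R) lo hi v N :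
  (forall n, is_RInt (a n) lo hi (v n)) ->
  is_RInt (fun t => sum_n (fun n => a n t) N) lo hi (sum_n v N).
Proof.
  intros H. induction N.
  - rewrite sum_O. eapply is_RInt_ext; [|apply H]. intros. now rewrite sum_O.
  - rewrite sum_Sn. eapply is_RInt_ext; [|apply is_RInt_plus; [apply IHN | apply H]].
    intros. simpl. now rewrite sum_Sn.
Qed.

(* The integrands are first clamped to [lo, hi] so that the convergence of the
   partial sums is uniform on all of R, as [filterlim_RInt] requires. *)
Lemma is_RInt_Series (a : nat -> R -> R) (M : nat -> R) lo hi (v : nat -> R) :
  lo <= hi ->
  (forall n t, lo <= t <= hi -> Rabs (a n t) <= M n) -> ex_series M ->
  (forall n, is_RInt (a n) lo hi (v n)) ->
  ex_series v /\ is_RInt (fun t => Series (fun n => a n t)) lo hi (Series v).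
Proof.
  intros Hlh Hb HM Hv.
  set (clamp := fun t => Rmax lo (Rmin hi t)).
  assert (Hclamp_in : forall t, lo <= clamp t <= hi).
  { intros t. unfold clamp, Rmax, Rmin. repeat destruct Rle_dec; lra. }
  assert (Hclamp_id : forall t, Rmin lo hi < t < Rmax lo hi -> clamp t = t).
  { intros t Ht. rewrite Rmin_left, Rmax_right in Ht by lra. unfold clamp.
    rewrite Rmin_right by lra. rewrite Rmax_right; lra. }
  set (b := fun n t => a n (clamp t)).
  set (g := fun t => Series (fun n => b n t)).
  assert (Hf : forall N, is_RInt (fun t => sum_n (fun n => b n t) N) lo hi (sum_n v N)).
  { intros N. apply is_RInt_sum_n. intros n.
    eapply is_RInt_ext; [|apply Hv]. intros x Hx. unfold b. rewrite Hclamp_id; auto. }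
  assert (Hunif : filterlim (fun N t => sum_n (fun n => b n t) N) eventually
                    (locally (g : fct_UniformSpace R R_CompleteNormedModule))).
  { intros P [eps Heps].
    destruct (Series_sub_sum_n_lt M HM eps (cond_pos eps)) as [N0 HN0].
    exists N0. intros N HN. apply Heps. intros t.
    destruct (Series_tail_le (fun n => b n t) M N) as [_ Ht]; [intros n; apply Hb; auto | exact HM|].
    specialize (HN0 N HN). pose proof (Rle_abs (Series M - sum_n M N)).
    change (Rabs (sum_n (fun n => b n t) N - g t) < eps).
    rewrite Rabs_minus_sym. unfold g. lra. }
  destruct (filterlim_RInt _ lo hi eventually _ g (sum_n v) Hf Hunif) as [Iv [Hs HI]].
  rewrite (is_series_unique _ _ Hs). split; [now exists Iv|].
  eapply is_RInt_ext; [|exact HI]. intros x Hx.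
  unfold g, b. apply Series_ext. intros n. rewrite Hclamp_id; auto.
Qed.

Lemma Rabs_Series_weighted_le (w g M : nat -> R) d N :
  (forall n, 0 <= w n) -> ex_series (fun n => w n * M n) ->
  (forall n, Rabs (g n) <= M n) -> (forall n, Rabs (g n) <= d) ->
  Rabs (Series (fun n => w n * g n)) <=
    d * sum_n w N + (Series (fun n => w n * M n) - sum_n (fun n => w n * M n) N).
Proof.
  intros Hw HM HgM Hgd.
  assert (Hwg : forall n c, Rabs (g n) <= c -> Rabs (w n * g n) <= w n * c).
  { intros n c Hc. rewrite Rabs_mult, Rabs_right by (apply Rle_ge; auto).
    apply Rmult_le_compat_l; auto. }
  destruct (Series_tail_le (fun n => w n * g n) (fun n => w n * M n) N) as [_ Htail];
    [intros n; apply Hwg; auto | exact HM |].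
  assert (Hhead : Rabs (sum_n (fun n => w n * g n) N) <= d * sum_n w N).
  { eapply Rle_trans; [apply sum_n_abs|]. rewrite Rmult_comm, <- sum_n_mult_r.
    apply sum_n_le. intros n. apply Hwg; auto. }
  pose proof (Rabs_triang (Series (fun n => w n * g n) - sum_n (fun n => w n * g n) N)
                          (sum_n (fun n => w n * g n) N)) as Htri.
  replace (Series (fun n => w n * g n) - sum_n (fun n => w n * g n) N + sum_n (fun n => w n * g n) N)
    with (Series (fun n => w n * g n)) in Htri by ring.
  lra.
Qed.

(* Tannery's theorem, the parameter [p] tending to its limit as [d p] tends to 0. *)
Lemma Series_weighted_near (P : Type) (adm : P -> Prop) (d : P -> R)
    (w M F : nat -> R) (J : P -> nat -> R) :
  (forall n, 0 <= w n) -> ex_series (fun n => w n * M n) -> ex_series (fun n => w n * F n) ->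
  (forall p n, adm p -> Rabs (J p n - F n) <= M n /\ Rabs (J p n - F n) <= d p) ->
  (forall p, adm p -> ex_series (fun n => w n * J p n)) ->
  forall eps, 0 < eps -> exists delta, 0 < delta /\
    forall p, adm p -> d p < delta ->
      Rabs (Series (fun n => w n * J p n) - Series (fun n => w n * F n)) < eps.
Proof.
  intros Hw HM HF HJ HJs eps Heps.
  destruct (Series_sub_sum_n_lt _ HM (eps / 2)) as [N HN]; [lra|].
  specialize (HN N (le_n N)).
  pose proof (Rle_abs (Series (fun n => w n * M n) - sum_n (fun n => w n * M n) N)) as Htail.
  pose proof (sum_n_nonneg w N Hw) as HSw.
  exists (eps / (2 * (sum_n w N + 1))). split; [apply Rdiv_lt_0_compat; lra|].
  intros p Hp Hd.
  assert (Hd0 : 0 <= d p) by (eapply Rle_trans; [apply Rabs_pos | apply (HJ p 0%nat Hp)]).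
  assert (Hhead : d p * sum_n w N < eps / 2).
  { apply Rle_lt_trans with (eps / (2 * (sum_n w N + 1)) * sum_n w N).
    - apply Rmult_le_compat_r; lra.
    - apply Rmult_lt_reg_r with (2 * (sum_n w N + 1)); [lra|]. field_simplify; lra. }
  rewrite <- Series_minus by auto.
  rewrite (Series_ext _ (fun n => w n * (J p n - F n))) by (intros n; ring).
  pose proof (Rabs_Series_weighted_le w (fun n => J p n - F n) M (d p) N Hw HM
                (fun n => proj1 (HJ p n Hp)) (fun n => proj2 (HJ p n Hp))) as Hsplit.
  cbv beta in Hsplit. lra.
Qed.

Lemma is_RInt_lin2 (f g : R -> R) a b c1 c2 If Ig :
  is_RInt f a b If -> is_RInt g a b Ig ->
  is_RInt (fun t => c1 * f t + c2 * g t) a b (c1 * If + c2 * Ig).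
Proof.
  intros Hf Hg.
  apply (is_RInt_plus (fun t => c1 * f t) (fun t => c2 * g t));
    [apply (is_RInt_scal f) | apply (is_RInt_scal g)]; assumption.
Qed.

Lemma RInt_reflect_odd (g : R -> R) c :
  ex_RInt g 0 c -> (forall t, g (c - t) = - g t) -> RInt g 0 c = 0.
Proof.
  intros Hg Hodd.
  assert (H := RInt_comp_lin g (-1) c 0 c).
  replace (-1 * 0 + c) with c in H by ring.
  replace (-1 * c + c) with 0 in H by ring.
  rewrite <- (opp_RInt_swap g 0 c Hg) in H.
  rewrite (RInt_ext _ g) in H.
  2:{ intros x _. replace (-1 * x + c) with (c - x) by ring.
      rewrite Hodd. unfold scal; simpl. unfold mult; simpl. ring. }
  unfold opp in H; simpl in H. specialize (H (ex_RInt_swap _ _ _ Hg)). lra.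
Qed.

Lemma Rabs_RInt_le_RInt (g e : R -> R) a b : a <= b ->
  (forall t, continuous g t) -> (forall t, continuous e t) -> (forall t, Rabs (g t) <= e t) ->
  Rabs (RInt g a b) <= RInt e a b.
Proof.
  intros Hab Hg He Hge.
  eapply Rle_trans; [apply abs_RInt_le; auto; now apply ex_RInt_of_continuous|].
  apply RInt_le; auto; apply ex_RInt_of_continuous; auto.
  intros t. apply (continuous_comp g Rabs); [apply Hg | apply continuous_Rabs].
Qed.

Lemma Rabs_RInt_sub_le (g e : R -> R) a b c : 0 <= a <= b -> b <= c ->
  (forall t, continuous g t) -> (forall t, continuous e t) ->
  (forall t, Rabs (g t) <= e t) -> (forall t, e t <= 1) ->
  Rabs (RInt g a b - RInt g 0 c) <= RInt e 0 c /\
  Rabs (RInt g a b - RInt g 0 c) <= a + (c - b).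
Proof.
  intros Ha Hb Hg He Hge He1.
  assert (Hexg : forall x y, ex_RInt g x y) by (intros; now apply ex_RInt_of_continuous).
  assert (Hexe : forall x y, ex_RInt e x y) by (intros; now apply ex_RInt_of_continuous).
  assert (Cg1 := RInt_Chasles g 0 a b (Hexg _ _) (Hexg _ _)).
  assert (Cg2 := RInt_Chasles g 0 b c (Hexg _ _) (Hexg _ _)).
  assert (Ce1 := RInt_Chasles e 0 a b (Hexe _ _) (Hexe _ _)).
  assert (Ce2 := RInt_Chasles e 0 b c (Hexe _ _) (Hexe _ _)).
  unfold plus in Cg1, Cg2, Ce1, Ce2; simpl in Cg1, Cg2, Ce1, Ce2.
  assert (Hconst : forall x y, x <= y -> Rabs (RInt g x y) <= y - x).
  { intros x y Hxy. rewrite <- (Rmult_1_r (y - x)).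
    apply abs_RInt_le_const; auto. intros t _. eapply Rle_trans; [apply Hge | apply He1]. }
  pose proof (Rabs_RInt_le_RInt g e 0 a ltac:(lra) Hg He Hge).
  pose proof (Rabs_RInt_le_RInt g e b c ltac:(lra) Hg He Hge).
  pose proof (Hconst 0 a ltac:(lra)). pose proof (Hconst b c ltac:(lra)).
  assert (Hmid : 0 <= RInt e a b).
  { apply RInt_ge_0; [lra | apply Hexe |].
    intros t _. eapply Rle_trans; [apply Rabs_pos | apply Hge]. }
  replace (RInt g a b - RInt g 0 c) with (- (RInt g 0 a + RInt g b c)) by lra.
  rewrite Rabs_Ropp. pose proof (Rabs_triang (RInt g 0 a) (RInt g b c)).
  split; lra.
Qed.

(** * The binomial series of (1 - x)^(-1/2) *)

(* [cbinom n = C(2n, n) / 4^n]. *)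
Fixpoint cbinom (n : nat) : R :=
  match n with
  | 0%nat => 1
  | S n => cbinom n * (2 * INR n + 1) / (2 * INR n + 2)
  end.

Lemma cbinom_pos n : 0 < cbinom n.
Proof.
  induction n; simpl; [lra|]. pose proof (pos_INR n). apply Rdiv_lt_0_compat; nra.
Qed.

Lemma cbinom_S_le n : cbinom (S n) <= cbinom n.
Proof.
  simpl. pose proof (pos_INR n). pose proof (cbinom_pos n).
  apply Rmult_le_reg_r with (2 * INR n + 2); [lra|]. field_simplify; nra.
Qed.

Lemma cbinom_le_1 n : cbinom n <= 1.
Proof. induction n; [simpl; lra|]. pose proof (cbinom_S_le n). lra. Qed.

Lemma cbinom_sqr_mul_le n : cbinom n ^ 2 * (INR n + 1) <= 1.
Proof.
  induction n; [simpl; lra|].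
  change (cbinom (S n)) with (cbinom n * (2 * INR n + 1) / (2 * INR n + 2)).
  rewrite S_INR. pose proof (pos_INR n) as Hn.
  set (x := INR n) in *. set (c := cbinom n) in *.
  replace ((c * (2 * x + 1) / (2 * x + 2)) ^ 2 * (x + 1 + 1))
    with (c ^ 2 * (x + 1) * ((2 * x + 1) ^ 2 * (x + 2)) / ((2 * x + 2) ^ 2 * (x + 1)))
    by (field; lra).
  apply Rmult_le_reg_r with ((2 * x + 2) ^ 2 * (x + 1)); [nra|].
  unfold Rdiv. rewrite Rmult_assoc, Rinv_l, Rmult_1_r, Rmult_1_l by nra.
  assert (Hgrow : (2 * x + 1) ^ 2 * (x + 2) <= (2 * x + 2) ^ 2 * (x + 1)) by nra.
  assert (0 <= (2 * x + 1) ^ 2 * (x + 2)) by nra.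
  nra.
Qed.

Lemma cbinom_le_inv_sqrt n : cbinom n <= / sqrt (INR n + 1).
Proof.
  pose proof (cbinom_sqr_mul_le n). pose proof (cbinom_pos n). pose proof (pos_INR n).
  rewrite <- sqrt_inv, <- (sqrt_pow2 (cbinom n)) by lra. apply sqrt_le_1_alt.
  apply Rmult_le_reg_r with (INR n + 1); [lra|]. rewrite Rinv_l by lra. lra.
Qed.

Lemma CV_radius_cbinom x : Rabs x < 1 -> Rbar_lt (Rabs x) (CV_radius cbinom).
Proof.
  intros Hx.
  assert (H1 : Rbar_le 1 (CV_radius cbinom)).
  { apply CV_radius_bounded. exists 1. intros n.
    rewrite pow1, Rmult_1_r, Rabs_right by (left; apply cbinom_pos). apply cbinom_le_1. }
  destruct (CV_radius cbinom); simpl in *; auto; lra.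
Qed.

(* The recursion of [cbinom] says exactly that S = PSeries cbinom solves
   (1 - x) S' = S / 2. *)
Lemma PSeries_cbinom_derive x : Rabs x < 1 ->
  (1 - x) * PSeries (PS_derive cbinom) x = / 2 * PSeries cbinom x.
Proof.
  intros Hx.
  assert (Hd : ex_pseries (PS_derive cbinom) x).
  { apply CV_radius_inside. rewrite CV_radius_derive. now apply CV_radius_cbinom. }
  assert (Hi : ex_pseries (PS_incr_1 (PS_derive cbinom)) x).
  { apply CV_radius_inside. rewrite CV_radius_incr_1, CV_radius_derive. now apply CV_radius_cbinom. }
  rewrite Rmult_minus_distr_r, Rmult_1_l.
  rewrite <- PSeries_incr_1, <- PSeries_minus, <- PSeries_scal by auto.
  apply PSeries_ext. intros n.
  unfold PS_minus, PS_scal, PS_incr_1, PS_derive. destruct n.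
  - simpl. unfold plus, opp, zero, scal; simpl. unfold mult; simpl. field.
  - change (INR (S (S n)) * cbinom (S (S n)) + - (INR (S n) * cbinom (S n)) = / 2 * cbinom (S n)).
    change (cbinom (S (S n))) with (cbinom (S n) * (2 * INR (S n) + 1) / (2 * INR (S n) + 2)).
    rewrite !S_INR. pose proof (pos_INR n). field. lra.
Qed.

Lemma PSeries_cbinom_sqr x : Rabs x < 1 -> (1 - x) * (PSeries cbinom x * PSeries cbinom x) = 1.
Proof.
  intros Hx.
  set (g := fun y => (1 - y) * (PSeries cbinom y * PSeries cbinom y)).
  assert (Hin : forall y, Rmin 0 x <= y <= Rmax 0 x -> Rabs y < 1).
  { intros y Hy. apply Rabs_def2 in Hx. apply Rabs_def1; unfold Rmin, Rmax in Hy;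
      destruct Rle_dec; lra. }
  assert (Hg : forall y, Rabs y < 1 -> derivable_pt_lim g y 0).
  { intros y Hy. unfold g.
    pose proof (PSeries_cbinom_derive y Hy) as Hd.
    replace 0 with ((0 - 1) * (PSeries cbinom y * PSeries cbinom y) +
      (1 - y) * (PSeries (PS_derive cbinom) y * PSeries cbinom y
                 + PSeries cbinom y * PSeries (PS_derive cbinom) y)) by nra.
    apply (derivable_pt_lim_mult (fun y => 1 - y) (fun y => PSeries cbinom y * PSeries cbinom y)).
    - apply (derivable_pt_lim_minus (fun _ => 1) (fun y => y));
        [apply derivable_pt_lim_const | apply derivable_pt_lim_id].
    - apply derivable_pt_lim_mult; apply is_derive_Reals, is_derive_PSeries;
        now apply CV_radius_cbinom. }
  destruct (MVT_gen g 0 x (fun _ => 0)) as [c [_ Hgc]].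
  - intros y Hy. apply is_derive_Reals, Hg, Hin. lra.
  - intros y Hy. apply derivable_continuous_pt. exists 0. now apply Hg, Hin.
  - assert (Hg0 : g 0 = 1) by (unfold g; rewrite PSeries_0; simpl; ring).
    change (g x = 1). lra.
Qed.

(* Pairing consecutive terms: [c_(2i) x^(2i) + c_(2i+1) x^(2i+1) >= 0] because
   [cbinom] is decreasing and [x >= -1]. *)
Lemma sum_n_cbinom_odd_ge x j : -1 <= x -> 1 / 2 <= sum_n (fun k => cbinom k * x ^ k) (2 * j + 1).
Proof.
  intros Hx. induction j.
  - simpl. rewrite sum_n_S, sum_O. simpl. lra.
  - replace (2 * S j + 1)%nat with (S (S (2 * j + 1))) by lia.
    rewrite !sum_n_S.
    replace (S (2 * j + 1)) with (2 * (j + 1))%nat by lia.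
    set (i := (2 * (j + 1))%nat).
    pose proof (cbinom_S_le i). pose proof (cbinom_pos (S i)).
    assert (Heven : 0 <= x ^ i) by (unfold i; rewrite pow_mult; apply pow_le; nra).
    assert (0 <= x ^ i * (cbinom i + cbinom (S i) * x)) by (apply Rmult_le_pos; nra).
    simpl (x ^ S i). nra.
Qed.

Lemma PSeries_cbinom_ge_half x : Rabs x < 1 -> 1 / 2 <= PSeries cbinom x.
Proof.
  intros Hx.
  assert (Hs : is_series (fun k => cbinom k * x ^ k) (PSeries cbinom x)).
  { apply (is_series_ext (fun k => scal (pow_n x k) (cbinom k))).
    - intros n. rewrite pow_n_pow. unfold scal; simpl; unfold mult; simpl. ring.
    - apply PSeries_correct, CV_radius_inside, CV_radius_cbinom, Hx. }
  apply Rabs_def2 in Hx.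
  apply (is_lim_seq_le (fun _ => 1 / 2) (fun j => sum_n (fun k => cbinom k * x ^ k) (2 * j + 1))
           (1 / 2) (PSeries cbinom x)).
  - intros j. apply sum_n_cbinom_odd_ge. lra.
  - apply is_lim_seq_const.
  - apply (is_lim_seq_subseq (sum_n (fun k => cbinom k * x ^ k))); [|exact Hs].
    apply eventually_subseq. intros n. lia.
Qed.

Lemma PSeries_cbinom x : Rabs x < 1 -> PSeries cbinom x = / sqrt (1 - x).
Proof.
  intros Hx. pose proof (PSeries_cbinom_sqr x Hx). pose proof (PSeries_cbinom_ge_half x Hx).
  apply Rabs_def2 in Hx.
  rewrite <- sqrt_inv, <- (sqrt_pow2 (PSeries cbinom x)) by lra. f_equal.
  apply Rmult_eq_reg_l with (1 - x); [|lra]. rewrite Rinv_r by lra. nra.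
Qed.

(** * Moments of powers of the cosine *)

Lemma cos_IZR_mult_2PI l : cos (IZR l * (2 * PI)) = 1.
Proof.
  destruct (Z_le_gt_dec 0 l).
  - replace (IZR l * (2 * PI)) with (0 + 2 * INR (Z.to_nat l) * PI)
      by (rewrite INR_IZR_INZ, Z2Nat.id by lia; ring).
    now rewrite cos_period, cos_0.
  - replace (IZR l * (2 * PI)) with (- (0 + 2 * INR (Z.to_nat (- l)) * PI))
      by (rewrite INR_IZR_INZ, Z2Nat.id, opp_IZR by lia; ring).
    now rewrite cos_neg, cos_period, cos_0.
Qed.

Lemma sin_IZR_mult_2PI l : sin (IZR l * (2 * PI)) = 0.
Proof. apply sin_eq_0_1. exists (2 * l)%Z. rewrite mult_IZR. ring. Qed.

Lemma sin_IZR_mult_2PI_sub l t : sin (IZR l * (2 * PI - t)) = - sin (IZR l * t).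
Proof.
  replace (IZR l * (2 * PI - t)) with (IZR l * (2 * PI) - IZR l * t) by ring.
  rewrite sin_minus, cos_IZR_mult_2PI, sin_IZR_mult_2PI. ring.
Qed.

Lemma Rabs_cos_mult_cos_pow_le k n t : Rabs (cos (IZR k * t) * cos t ^ n) <= 1.
Proof.
  rewrite Rabs_mult, <- RPow_abs.
  pose proof (COS_bound (IZR k * t)). pose proof (COS_bound t).
  assert (Rabs (cos (IZR k * t)) <= 1) by (apply Rabs_le; lra).
  assert (Rabs (cos t) ^ n <= 1)
    by (rewrite <- (pow1 n); apply pow_incr; split; [apply Rabs_pos | apply Rabs_le; lra]).
  pose proof (Rabs_pos (cos (IZR k * t))). pose proof (pow_le _ n (Rabs_pos (cos t))). nra.
Qed.

Definition cos_moment (n : nat) (k : Z) : R :=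
  RInt (fun t => cos (IZR k * t) * cos t ^ n) 0 (2 * PI).

Lemma ex_RInt_cos_moment n k a b : ex_RInt (fun t => cos (IZR k * t) * cos t ^ n) a b.
Proof.
  apply ex_RInt_of_continuous. intros z. apply continuous_of_ex_derive. auto_derive. auto.
Qed.

Lemma cos_moment_0 k : cos_moment 0 k = if Z.eq_dec k 0 then 2 * PI else 0.
Proof.
  unfold cos_moment. destruct (Z.eq_dec k 0) as [->|Hk].
  - rewrite (RInt_ext _ (fun _ => 1)) by (intros; simpl; rewrite Rmult_0_l, cos_0; ring).
    rewrite RInt_const. unfold scal; simpl; unfold mult; simpl. ring.
  - apply not_0_IZR in Hk. apply is_RInt_unique.
    assert (Hftc : is_RInt (fun t => cos (IZR k * t) * cos t ^ 0) 0 (2 * PI)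
                     (sin (IZR k * (2 * PI)) / IZR k - sin (IZR k * 0) / IZR k)).
    { apply (is_RInt_derive_R (fun t => sin (IZR k * t) / IZR k)).
      - intros x _. auto_derive; auto. field; auto.
      - intros x _. apply continuous_of_ex_derive. auto_derive. auto. }
    rewrite sin_IZR_mult_2PI, Rmult_0_r, sin_0 in Hftc.
    replace (0 / IZR k - 0 / IZR k) with 0 in Hftc by (field; auto). exact Hftc.
Qed.

Lemma cos_moment_S n k :
  cos_moment (S n) k = / 2 * cos_moment n (k + 1) + / 2 * cos_moment n (k - 1).
Proof.
  unfold cos_moment. apply is_RInt_unique.
  eapply is_RInt_ext; [|apply is_RInt_lin2;
    apply (RInt_correct (V := R_CompleteNormedModule)), ex_RInt_cos_moment].
  intros x _. rewrite plus_IZR, minus_IZR. simpl pow.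
  replace ((IZR k + 1) * x) with (IZR k * x + x) by ring.
  replace ((IZR k - 1) * x) with (IZR k * x - x) by ring.
  rewrite cos_plus, cos_minus. eq_in_R. field.
Qed.

Lemma cos_moment_opp n k : cos_moment n (- k) = cos_moment n k.
Proof.
  unfold cos_moment. apply RInt_ext. intros x _. rewrite opp_IZR.
  replace (- IZR k * x) with (- (IZR k * x)) by ring. now rewrite cos_neg.
Qed.

Lemma cos_moment_ge_0 n k : 0 <= cos_moment n k.
Proof.
  revert k. induction n; intros k.
  - rewrite cos_moment_0. destruct Z.eq_dec; [pose proof PI_RGT_0 |]; lra.
  - rewrite cos_moment_S. pose proof (IHn (k + 1)%Z). pose proof (IHn (k - 1)%Z). lra.
Qed.

Lemma cos_moment_diag_gt_0 n : 0 < cos_moment n (Z.of_nat n).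
Proof.
  induction n.
  - rewrite cos_moment_0. simpl. pose proof PI_RGT_0. lra.
  - rewrite cos_moment_S. pose proof (cos_moment_ge_0 n (Z.of_nat (S n) + 1)).
    replace (Z.of_nat (S n) - 1)%Z with (Z.of_nat n) by lia. lra.
Qed.

Lemma cos_moment_abs_gt_0 k : 0 < cos_moment (Z.abs_nat k) k.
Proof.
  destruct (Z_le_gt_dec 0 k).
  - replace k with (Z.of_nat (Z.abs_nat k)) at 2 by lia. apply cos_moment_diag_gt_0.
  - replace k with (- Z.of_nat (Z.abs_nat k))%Z at 2 by lia.
    rewrite cos_moment_opp. apply cos_moment_diag_gt_0.
Qed.

Lemma cos_moment_le n k : cos_moment n k <= 2 * PI.
Proof.
  unfold cos_moment. pose proof PI_RGT_0.
  eapply Rle_trans; [apply Rle_abs|].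
  rewrite <- (Rmult_1_r (2 * PI)), <- (Rminus_0_r (2 * PI)) at 2.
  apply abs_RInt_le_const; [lra | apply ex_RInt_cos_moment |].
  intros t _. apply Rabs_cos_mult_cos_pow_le.
Qed.

Lemma sin_sqr_ge x : Rabs x <= PI / 2 -> x ^ 2 / 9 <= sin x ^ 2.
Proof.
  assert (Hpos : forall y, 0 <= y <= PI / 2 -> y ^ 2 / 9 <= sin y ^ 2).
  { intros y Hy. pose proof PI_4. pose proof PI2_Rlt_PI.
    destruct (sin_bound y 0) as [Hlow _]; try lra.
    unfold sin_approx, sin_term in Hlow. simpl in Hlow. unfold Factorial.fact in Hlow. simpl in Hlow.
    assert (y - y ^ 3 / 6 <= sin y) by (field_simplify in Hlow; field_simplify; lra).
    assert (y / 3 <= y - y ^ 3 / 6) by nra.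
    nra. }
  intros Hx. destruct (Rle_dec 0 x).
  - apply Hpos. rewrite Rabs_right in Hx; lra.
  - rewrite Rabs_left in Hx by lra.
    replace (sin x ^ 2) with (sin (- x) ^ 2) by (rewrite sin_neg; ring).
    replace (x ^ 2) with ((- x) ^ 2) by ring. apply Hpos. lra.
Qed.

Definition lorentz (c b t : R) : R := / (1 + b * (t - c) ^ 2).

Lemma lorentz_pos c b t : 0 <= b -> 0 < lorentz c b t.
Proof. intros. unfold lorentz. apply Rinv_0_lt_compat. pose proof (pow2_ge_0 (t - c)). nra. Qed.

Lemma is_RInt_lorentz c b lo hi : 0 < b ->
  is_RInt (lorentz c b) lo hi ((atan (sqrt b * (hi - c)) - atan (sqrt b * (lo - c))) / sqrt b).
Proof.
  intros Hb. pose proof (sqrt_lt_R0 b Hb) as Hs.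
  assert (Hsb : sqrt b * sqrt b = b) by (apply sqrt_sqrt; lra).
  replace ((atan (sqrt b * (hi - c)) - atan (sqrt b * (lo - c))) / sqrt b)
    with (atan (sqrt b * (hi - c)) / sqrt b - atan (sqrt b * (lo - c)) / sqrt b) by (field; lra).
  apply (is_RInt_derive_R (fun t => atan (sqrt b * (t - c)) / sqrt b)).
  - intros x _.
    assert (Hd : derivable_pt_lim (fun t => atan (sqrt b * (t - c))) x
                   (/ (1 + (sqrt b * (x - c)) ^ 2) * sqrt b)).
    { apply (derivable_pt_lim_comp (fun t => sqrt b * (t - c)) atan);
        [| apply derivable_pt_lim_atan].
      apply is_derive_Reals. auto_derive; auto; ring. }
    apply is_derive_Reals.
    replace (lorentz c b x) with
      ((/ (1 + (sqrt b * (x - c)) ^ 2) * sqrt b * sqrt b - 0 * atan (sqrt b * (x - c))) / (sqrt b)²).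
    2:{ unfold lorentz, Rsqr. replace ((sqrt b * (x - c)) ^ 2) with (b * (x - c) ^ 2) by nra.
        pose proof (pow2_ge_0 (x - c)). field. split; [nra | lra]. }
    apply (derivable_pt_lim_div (fun t => atan (sqrt b * (t - c))) (fun _ => sqrt b));
      [exact Hd | apply derivable_pt_lim_const | lra].
  - intros x _. apply continuous_of_ex_derive. unfold lorentz. auto_derive.
    pose proof (pow2_ge_0 (x - c)). nra.
Qed.

Lemma lorentz_integral_le c b lo hi : 0 < b ->
  (atan (sqrt b * (hi - c)) - atan (sqrt b * (lo - c))) / sqrt b <= PI / sqrt b.
Proof.
  intros Hb. pose proof (sqrt_lt_R0 b Hb).
  pose proof (atan_bound (sqrt b * (hi - c))). pose proof (atan_bound (sqrt b * (lo - c))).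
  unfold Rdiv. apply Rmult_le_compat_r; [left; apply Rinv_0_lt_compat|]; lra.
Qed.

(* On [0, 2 PI] the function [1 / (1 + g sin^2 t)] is dominated by Lorentz
   peaks at the three zeros [0], [PI], [2 PI] of [sin]. *)
Lemma inv_1_plus_sin2_le_lorentz g t : 0 < g -> 0 <= t <= 2 * PI ->
  / (1 + g * sin t ^ 2) <=
    lorentz 0 (g / 9) t + lorentz PI (g / 9) t + lorentz (2 * PI) (g / 9) t.
Proof.
  intros Hg Ht.
  assert (Hpeak : forall c, Rabs (t - c) <= PI / 2 -> sin t ^ 2 = sin (t - c) ^ 2 ->
                  / (1 + g * sin t ^ 2) <= lorentz c (g / 9) t).
  { intros c Hc Hs. unfold lorentz. rewrite Hs.
    pose proof (sin_sqr_ge (t - c) Hc). pose proof (pow2_ge_0 (t - c)).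
    apply Rinv_le_contravar; [nra|]. nra. }
  pose proof (lorentz_pos 0 (g / 9) t ltac:(lra)).
  pose proof (lorentz_pos PI (g / 9) t ltac:(lra)).
  pose proof (lorentz_pos (2 * PI) (g / 9) t ltac:(lra)).
  destruct (Rle_dec t (PI / 2)); [|destruct (Rle_dec t (3 * (PI / 2)))].
  - assert (/ (1 + g * sin t ^ 2) <= lorentz 0 (g / 9) t).
    { apply Hpeak; [apply Rabs_le; lra | now rewrite Rminus_0_r]. }
    lra.
  - assert (/ (1 + g * sin t ^ 2) <= lorentz PI (g / 9) t).
    { apply Hpeak; [apply Rabs_le; lra |]. rewrite sin_minus, sin_PI, cos_PI. ring. }
    lra.
  - assert (/ (1 + g * sin t ^ 2) <= lorentz (2 * PI) (g / 9) t).
    { apply Hpeak; [apply Rabs_le; lra |]. rewrite sin_minus, sin_2PI, cos_2PI. ring. }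
    lra.
Qed.

Lemma ex_RInt_inv_1_plus_sin2 g a b : 0 <= g -> ex_RInt (fun t => / (1 + g * sin t ^ 2)) a b.
Proof.
  intros Hg. apply ex_RInt_of_continuous. intros z. apply continuous_of_ex_derive.
  auto_derive. pose proof (pow2_ge_0 (sin z)). simpl in *. nra.
Qed.

Lemma RInt_inv_1_plus_sin2_le g : 0 < g ->
  RInt (fun t => / (1 + g * sin t ^ 2)) 0 (2 * PI) <= 9 * PI / sqrt g.
Proof.
  intros Hg. pose proof PI_RGT_0.
  assert (Hb : 0 < g / 9) by lra.
  assert (Hsqrt : sqrt (g / 9) = sqrt g / 3).
  { replace (g / 9) with (g * / 3 ^ 2) by field.
    rewrite sqrt_mult_alt, sqrt_inv, sqrt_pow2 by lra. field. }
  pose proof (sqrt_lt_R0 g Hg).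
  set (v := fun c =>
    (atan (sqrt (g / 9) * (2 * PI - c)) - atan (sqrt (g / 9) * (0 - c))) / sqrt (g / 9)).
  apply Rle_trans with (v 0 + v PI + v (2 * PI)).
  - apply (is_RInt_le (fun t => / (1 + g * sin t ^ 2))
             (fun t => lorentz 0 (g / 9) t + lorentz PI (g / 9) t + lorentz (2 * PI) (g / 9) t)
             0 (2 * PI) _ (v 0 + v PI + v (2 * PI))); [lra | | |].
    + apply (RInt_correct (V := R_CompleteNormedModule)), ex_RInt_inv_1_plus_sin2. lra.
    + apply (is_RInt_plus (V := R_NormedModule));
        [apply (is_RInt_plus (V := R_NormedModule)) |]; apply is_RInt_lorentz; exact Hb.
    + intros x Hx. apply inv_1_plus_sin2_le_lorentz; lra.
  - pose proof (lorentz_integral_le 0 (g / 9) 0 (2 * PI) Hb).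
    pose proof (lorentz_integral_le PI (g / 9) 0 (2 * PI) Hb).
    pose proof (lorentz_integral_le (2 * PI) (g / 9) 0 (2 * PI) Hb).
    unfold v. rewrite Hsqrt in *.
    replace (9 * PI / sqrt g) with (3 * (PI / (sqrt g / 3))) by (field; lra).
    lra.
Qed.

(* [cos^2 = 1 - sin^2 <= 1 / (1 + sin^2 / 2)^2], then Bernoulli's inequality. *)
Lemma Rabs_cos_pow_le n t : Rabs (cos t) ^ n <= / (1 + (INR n / 2) * sin t ^ 2).
Proof.
  set (s2 := sin t ^ 2). set (c := Rabs (cos t)).
  assert (Hc2 : c ^ 2 = 1 - s2).
  { unfold c, s2. rewrite pow2_abs. pose proof (sin2_cos2 t). unfold Rsqr in *. simpl. nra. }
  assert (Hs : 0 <= s2) by apply pow2_ge_0.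
  assert (Hc : 0 <= c) by apply Rabs_pos.
  assert (Hcs : c * (1 + s2 / 2) <= 1).
  { assert ((c * (1 + s2 / 2)) ^ 2 <= 1).
    { replace ((c * (1 + s2 / 2)) ^ 2) with (c ^ 2 * (1 + s2 / 2) ^ 2) by ring. rewrite Hc2. nra. }
    nra. }
  apply Rle_trans with ((/ (1 + s2 / 2)) ^ n).
  - apply pow_incr. split; [lra|].
    apply Rmult_le_reg_r with (1 + s2 / 2); [lra|]. rewrite Rinv_l by lra. lra.
  - rewrite pow_inv. apply Rinv_le_contravar; [pose proof (pos_INR n); nra|].
    replace (INR n / 2 * s2) with (INR n * (s2 / 2)) by field. apply Rle_pow_lin. lra.
Qed.

Lemma cos_moment_le_inv_sqrt n k : (1 <= n)%nat -> cos_moment n k <= 9 * PI / sqrt (INR n / 2).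
Proof.
  intros Hn. assert (Hg : 0 < INR n / 2) by (apply le_INR in Hn; simpl in Hn; lra).
  eapply Rle_trans; [|apply (RInt_inv_1_plus_sin2_le _ Hg)].
  unfold cos_moment. pose proof PI_RGT_0.
  apply RInt_le; [lra | apply ex_RInt_cos_moment | apply ex_RInt_inv_1_plus_sin2; lra |].
  intros x _. eapply Rle_trans; [|apply Rabs_cos_pow_le].
  eapply Rle_trans; [apply Rle_abs|]. rewrite Rabs_mult, RPow_abs.
  pose proof (COS_bound (IZR k * x)). assert (Rabs (cos (IZR k * x)) <= 1) by (apply Rabs_le; lra).
  pose proof (Rabs_pos (cos x ^ n)). pose proof (Rabs_pos (cos (IZR k * x))). nra.
Qed.

(** * Functions with positive cosine moments *)

Definition cos_moment_w (F : R -> R) (m : nat) (k : Z) : R :=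
  RInt (fun t => cos (IZR k * t) * cos t ^ m * F t) 0 (2 * PI).

(* Multiplying [F] by a power series in [cos t] with nonnegative coefficients
   preserves this property, since [cos^j] only shifts the moments. *)
Definition cos_positive (F : R -> R) : Prop :=
  (forall m k, 0 <= cos_moment_w F m k) /\ (forall k, 0 < cos_moment_w F (Z.abs_nat k) k).

Lemma cos_positive_ext (F G : R -> R) :
  (forall t, F t = G t) -> cos_positive F -> cos_positive G.
Proof.
  intros HFG [Hge Hgt].
  assert (E : forall m k, cos_moment_w G m k = cos_moment_w F m k).
  { intros m k. apply RInt_ext. intros t _. now rewrite HFG. }
  split; intros; rewrite E; auto.
Qed.

Lemma cos_positive_1 : cos_positive (fun _ => 1).
Proof.
  assert (E : forall m k, cos_moment_w (fun _ => 1) m k = cos_moment m k).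
  { intros m k. apply RInt_ext. intros t _. apply Rmult_1_r. }
  split; intros; rewrite E; [apply cos_moment_ge_0 | apply cos_moment_abs_gt_0].
Qed.

Lemma is_RInt_mult_cos_Series (F : R -> R) (p : nat -> R) (G : R -> R) m k :
  (forall t, continuous F t) -> (forall t, Rabs (F t) <= 1) ->
  (forall j, 0 <= p j) -> ex_series p ->
  (forall t, G t = Series (fun j => p j * cos t ^ j)) ->
  ex_series (fun j => p j * cos_moment_w F (m + j) k) /\
  is_RInt (fun t => cos (IZR k * t) * cos t ^ m * (F t * G t)) 0 (2 * PI)
    (Series (fun j => p j * cos_moment_w F (m + j) k)).
Proof.
  intros HFc HFb Hp Hps HG. pose proof PI_RGT_0.
  destruct (is_RInt_Series (fun j t => p j * (cos (IZR k * t) * cos t ^ (m + j) * F t)) p 0 (2 * PI)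
              (fun j => p j * cos_moment_w F (m + j) k)) as [Hex HI]; [lra | | exact Hps | |].
  - intros j t _. rewrite Rabs_mult, (Rabs_right (p j)) by (apply Rle_ge; auto).
    rewrite <- (Rmult_1_r (p j)) at 2. apply Rmult_le_compat_l; [auto|].
    rewrite Rabs_mult, <- (Rmult_1_r 1).
    apply Rmult_le_compat; try apply Rabs_pos; auto. apply Rabs_cos_mult_cos_pow_le.
  - intros j. apply (is_RInt_scal (V := R_NormedModule)).
    apply (RInt_correct (V := R_CompleteNormedModule)), ex_RInt_of_continuous. intros z.
    apply (continuous_mult_R (fun t => cos (IZR k * t) * cos t ^ (m + j)) F); [|apply HFc].
    apply continuous_of_ex_derive. auto_derive. auto.
  - split; [exact Hex|]. eapply is_RInt_ext; [|exact HI]. intros t _. cbv beta.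
    rewrite HG, <- !Series_scal_l. apply Series_ext. intros j. rewrite pow_add. ring.
Qed.

Lemma cos_positive_mult_Series (F : R -> R) (p : nat -> R) (G : R -> R) :
  cos_positive F -> (forall t, continuous F t) -> (forall t, Rabs (F t) <= 1) ->
  (forall j, 0 <= p j) -> 0 < p 0%nat -> ex_series p ->
  (forall t, G t = Series (fun j => p j * cos t ^ j)) ->
  cos_positive (fun t => F t * G t).
Proof.
  intros [Hge Hgt] HFc HFb Hp Hp0 Hps HG.
  assert (Hsum : forall m k, cos_moment_w (fun t => F t * G t) m k =
                   Series (fun j => p j * cos_moment_w F (m + j) k)).
  { intros m k. apply is_RInt_unique, (is_RInt_mult_cos_Series F p G); auto. }
  assert (Hterm : forall m k j, 0 <= p j * cos_moment_w F (m + j) k).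
  { intros. apply Rmult_le_pos; auto. }
  assert (Hex : forall m k, ex_series (fun j => p j * cos_moment_w F (m + j) k)).
  { intros m k. apply (is_RInt_mult_cos_Series F p G); auto. }
  split.
  - intros m k. rewrite Hsum.
    apply Rle_trans with (p 0%nat * cos_moment_w F (m + 0) k); [apply Hterm|].
    apply (Series_ge_term (fun j => p j * cos_moment_w F (m + j) k)); auto.
  - intros k. rewrite Hsum.
    apply Rlt_le_trans with (p 0%nat * cos_moment_w F (Z.abs_nat k + 0) k).
    + rewrite Nat.add_0_r. apply Rmult_lt_0_compat; auto.
    + apply (Series_ge_term (fun j => p j * cos_moment_w F (Z.abs_nat k + j) k)); auto.
Qed.

Lemma RInt_cos_mult_Series_gt_0 (F : R -> R) (p : nat -> R) (G : R -> R) k :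
  cos_positive F -> (forall t, continuous F t) -> (forall t, Rabs (F t) <= 1) ->
  (forall j, 0 < p j) -> ex_series p ->
  (forall t, G t = Series (fun j => p j * cos t ^ j)) ->
  0 < RInt (fun t => cos (IZR k * t) * (F t * G t)) 0 (2 * PI).
Proof.
  intros [Hge Hgt] HFc HFb Hp Hps HG.
  assert (Hp' : forall j, 0 <= p j) by (intros j; left; auto).
  destruct (is_RInt_mult_cos_Series F p G 0 k HFc HFb Hp' Hps HG) as [Hex HI].
  rewrite (RInt_ext _ (fun t => cos (IZR k * t) * cos t ^ 0 * (F t * G t)))
    by (intros; simpl; eq_in_R; ring).
  rewrite (is_RInt_unique _ _ _ _ HI).
  apply Rlt_le_trans with (p (Z.abs_nat k) * cos_moment_w F (0 + Z.abs_nat k) k).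
  - apply Rmult_lt_0_compat; [apply Hp | apply Hgt].
  - apply (Series_ge_term (fun j => p j * cos_moment_w F (0 + j) k)); auto.
    intros j. apply Rmult_le_pos; auto.
Qed.

(** * The weights mu^(-n-1/2) *)

Definition rho (xi : R) : R := 1 - xi ^ 2.

Lemma rho_bounds xi : 0 < xi < 1 -> 0 < rho xi < 1.
Proof. intros. unfold rho. nra. Qed.

Lemma inv_sqr_sub_1_pos xi : 0 < xi < 1 -> 0 < / xi ^ 2 - 1.
Proof.
  intros. assert (1 < / xi ^ 2) by (rewrite <- Rinv_1; apply Rinv_lt_contravar; nra). lra.
Qed.

Lemma mu_eq_rho xi t : 0 < xi < 1 -> mu xi t = / xi ^ 2 * (1 - rho xi * cos t).
Proof. intros. unfold mu, rho. field. nra. Qed.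

Lemma mu_eq_1_plus xi t : mu xi t = 1 + (/ xi ^ 2 - 1) * (1 - cos t).
Proof. unfold mu. ring. Qed.

Lemma mu_ge_1 xi t : 0 < xi < 1 -> 1 <= mu xi t.
Proof.
  intros H. rewrite mu_eq_1_plus. pose proof (inv_sqr_sub_1_pos xi H). pose proof (COS_bound t). nra.
Qed.

Lemma mu_gt_1 xi t : 0 < xi < 1 -> cos t < 1 -> 1 < mu xi t.
Proof. intros H Hc. rewrite mu_eq_1_plus. pose proof (inv_sqr_sub_1_pos xi H). nra. Qed.

Lemma Rabs_rho_mult_cos_lt_1 xi t : 0 < xi < 1 -> Rabs (rho xi * cos t) < 1.
Proof.
  intros H. pose proof (rho_bounds xi H). pose proof (COS_bound t).
  rewrite Rabs_mult, (Rabs_right (rho xi)) by lra.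
  assert (Rabs (cos t) <= 1) by (apply Rabs_le; lra). pose proof (Rabs_pos (cos t)). nra.
Qed.

Lemma inv_mu_Series xi t : 0 < xi < 1 ->
  / mu xi t = Series (fun j => xi ^ 2 * rho xi ^ j * cos t ^ j).
Proof.
  intros H. pose proof (Rabs_rho_mult_cos_lt_1 xi t H) as Hq.
  rewrite mu_eq_rho by auto.
  rewrite (Series_ext _ (fun j => xi ^ 2 * (rho xi * cos t) ^ j))
    by (intros; rewrite Rpow_mult_distr; ring).
  rewrite Series_scal_l, (is_series_unique (pow (rho xi * cos t)) _ (is_series_geom _ Hq)).
  apply Rabs_def2 in Hq. field. split; nra.
Qed.

Lemma inv_sqrt_mu_Series xi t : 0 < xi < 1 ->
  / sqrt (mu xi t) = Series (fun j => xi * cbinom j * rho xi ^ j * cos t ^ j).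
Proof.
  intros H. pose proof (Rabs_rho_mult_cos_lt_1 xi t H) as Hq.
  rewrite mu_eq_rho by auto.
  rewrite (Series_ext _ (fun j => xi * (cbinom j * (rho xi * cos t) ^ j)))
    by (intros; rewrite Rpow_mult_distr; ring).
  rewrite Series_scal_l. change (Series (fun j => cbinom j * (rho xi * cos t) ^ j))
    with (PSeries cbinom (rho xi * cos t)).
  rewrite PSeries_cbinom by auto. apply Rabs_def2 in Hq.
  rewrite sqrt_mult_alt, sqrt_inv, sqrt_pow2 by (try left; try apply Rinv_0_lt_compat; nra).
  assert (0 < sqrt (1 - rho xi * cos t)) by (apply sqrt_lt_R0; lra).
  field. split; lra.
Qed.

Lemma ex_series_inv_mu_coef xi : 0 < xi < 1 -> ex_series (fun j => xi ^ 2 * rho xi ^ j).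
Proof.
  intros H. pose proof (rho_bounds xi H).
  apply ex_series_scal_l_R. eexists. apply is_series_geom. rewrite Rabs_right; lra.
Qed.

Lemma ex_series_inv_sqrt_mu_coef xi : 0 < xi < 1 ->
  ex_series (fun j => xi * cbinom j * rho xi ^ j).
Proof.
  intros H. pose proof (rho_bounds xi H).
  apply (ex_series_le (V := R_CompleteNormedModule) _ (fun j => xi * rho xi ^ j)).
  - intros n. change (norm (xi * cbinom n * rho xi ^ n)) with (Rabs (xi * cbinom n * rho xi ^ n)).
    pose proof (cbinom_pos n). pose proof (cbinom_le_1 n). pose proof (pow_lt (rho xi) n ltac:(lra)).
    rewrite Rabs_right by (apply Rle_ge; repeat apply Rmult_le_pos; lra).
    apply Rmult_le_compat_r; nra.
  - apply ex_series_scal_l_R. eexists. apply is_series_geom. rewrite Rabs_right; lra.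
Qed.

Definition mu_weight (xi : R) (n : nat) (t : R) : R := / mu xi t ^ n * / sqrt (mu xi t).

Lemma continuous_inv_mu_pow xi n t : 0 < xi < 1 -> continuous (fun s => / mu xi s ^ n) t.
Proof.
  intros H. apply continuous_of_ex_derive. pose proof (mu_ge_1 xi t H). unfold mu in *.
  auto_derive. replace (xi * (xi * 1)) with (xi ^ 2) by ring. apply pow_nonzero. lra.
Qed.

Lemma continuous_mu_weight xi n t : 0 < xi < 1 -> continuous (mu_weight xi n) t.
Proof.
  intros H. apply continuous_of_ex_derive. pose proof (mu_ge_1 xi t H).
  unfold mu_weight, mu in *. auto_derive. replace (xi * (xi * 1)) with (xi ^ 2) by ring.
  assert (0 < sqrt (/ xi ^ 2 + (1 - / xi ^ 2) * cos t)) by (apply sqrt_lt_R0; lra).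
  repeat split; [apply pow_nonzero | |]; lra.
Qed.

Lemma inv_mu_pow_bounds xi n t : 0 < xi < 1 -> 0 < / mu xi t ^ n <= 1.
Proof.
  intros H. pose proof (mu_ge_1 xi t H). split.
  - apply Rinv_0_lt_compat, pow_lt. lra.
  - rewrite <- Rinv_1. apply Rinv_le_contravar; [lra | now apply pow_R1_Rle].
Qed.

Lemma inv_sqrt_mu_bounds xi t : 0 < xi < 1 -> 0 < / sqrt (mu xi t) <= 1.
Proof.
  intros H. pose proof (mu_ge_1 xi t H).
  assert (1 <= sqrt (mu xi t)) by (rewrite <- sqrt_1; apply sqrt_le_1_alt; lra).
  split; [apply Rinv_0_lt_compat | rewrite <- Rinv_1; apply Rinv_le_contravar]; lra.
Qed.

Lemma mu_weight_le_pow xi n t m0 : 0 < xi < 1 -> 0 < m0 <= mu xi t ->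
  0 < mu_weight xi n t <= (/ m0) ^ n.
Proof.
  intros H Hm0. pose proof (inv_sqrt_mu_bounds xi t H). unfold mu_weight.
  assert (0 < (/ mu xi t) ^ n <= (/ m0) ^ n).
  { split; [apply pow_lt, Rinv_0_lt_compat; lra|].
    apply pow_incr. split; [left; apply Rinv_0_lt_compat | apply Rinv_le_contravar]; lra. }
  rewrite <- pow_inv. split; [apply Rmult_lt_0_compat|]; nra.
Qed.

Lemma mu_weight_bounds xi n t : 0 < xi < 1 -> 0 < mu_weight xi n t <= 1.
Proof.
  intros H. pose proof (mu_ge_1 xi t H).
  rewrite <- (pow1 n), <- Rinv_1. apply mu_weight_le_pow; lra.
Qed.

Lemma RInt_mu_weight_ge_0 xi n : 0 < xi < 1 -> 0 <= RInt (mu_weight xi n) 0 (2 * PI).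
Proof.
  intros H. pose proof PI_RGT_0.
  apply RInt_ge_0; [lra | apply ex_RInt_of_continuous; intros; now apply continuous_mu_weight |].
  intros t _. pose proof (mu_weight_bounds xi n t H). lra.
Qed.

Lemma cos_positive_inv_mu_pow xi n : 0 < xi < 1 -> cos_positive (fun t => / mu xi t ^ n).
Proof.
  intros H. pose proof (rho_bounds xi H). induction n.
  - apply (cos_positive_ext (fun _ => 1)); [intros; simpl; now rewrite Rinv_1 | apply cos_positive_1].
  - apply (cos_positive_ext (fun t => / mu xi t ^ n * / mu xi t)).
    { intros t. simpl. rewrite Rinv_mult. eq_in_R. ring. }
    apply (cos_positive_mult_Series _ (fun j => xi ^ 2 * rho xi ^ j)); auto.
    + intros t. apply continuous_inv_mu_pow, H.
    + intros t. pose proof (inv_mu_pow_bounds xi n t H). rewrite Rabs_right; lra.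
    + intros j. apply Rmult_le_pos; [nra | apply pow_le; lra].
    + simpl. nra.
    + now apply ex_series_inv_mu_coef.
    + intros t. now apply inv_mu_Series.
Qed.

Lemma RInt_cos_mu_weight_gt_0 xi n k : 0 < xi < 1 ->
  0 < RInt (fun t => cos (IZR k * t) * mu_weight xi n t) 0 (2 * PI).
Proof.
  intros H. pose proof (rho_bounds xi H). unfold mu_weight.
  apply (RInt_cos_mult_Series_gt_0 _ (fun j => xi * cbinom j * rho xi ^ j)).
  - now apply cos_positive_inv_mu_pow.
  - intros t. apply continuous_inv_mu_pow, H.
  - intros t. pose proof (inv_mu_pow_bounds xi n t H). rewrite Rabs_right; lra.
  - intros j. pose proof (cbinom_pos j). apply Rmult_lt_0_compat; [nra | apply pow_lt; lra].
  - now apply ex_series_inv_sqrt_mu_coef.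
  - intros t. now apply inv_sqrt_mu_Series.
Qed.

Lemma mu_weight_reflect xi n t : mu_weight xi n (2 * PI - t) = mu_weight xi n t.
Proof.
  unfold mu_weight, mu. replace (cos (2 * PI - t)) with (cos t); [reflexivity|].
  rewrite cos_minus, cos_2PI, sin_2PI. ring.
Qed.

(* [mu >= 1 + A (1 - cos t) >= 1 + A sin^2 t / 2] with [A = 1 / xi^2 - 1],
   then Bernoulli's inequality. *)
Lemma RInt_mu_weight_le xi n : 0 < xi < 1 -> (1 <= n)%nat ->
  RInt (mu_weight xi n) 0 (2 * PI) <= 9 * PI / sqrt (INR n * (/ xi ^ 2 - 1) / 2).
Proof.
  intros H Hn. pose proof (inv_sqr_sub_1_pos xi H) as HA. set (A := / xi ^ 2 - 1) in *.
  assert (1 <= INR n) by (apply le_INR in Hn; simpl in Hn; lra).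
  assert (Hg : 0 < INR n * A / 2) by nra.
  eapply Rle_trans; [|apply (RInt_inv_1_plus_sin2_le _ Hg)]. pose proof PI_RGT_0.
  apply RInt_le; [lra | apply ex_RInt_of_continuous; intros; now apply continuous_mu_weight
                 | apply ex_RInt_inv_1_plus_sin2; lra |].
  intros x _. apply Rle_trans with (/ mu xi x ^ n).
  - pose proof (inv_sqrt_mu_bounds xi x H). pose proof (inv_mu_pow_bounds xi n x H).
    unfold mu_weight. nra.
  - rewrite <- pow_inv.
    pose proof (COS_bound x). pose proof (pow2_ge_0 (sin x)).
    assert (Hy : 0 <= A * (1 - cos x)) by nra.
    assert (Hsc : sin x ^ 2 / 2 <= 1 - cos x).
    { pose proof (sin2_cos2 x) as Hsc2. unfold Rsqr in Hsc2. simpl. nra. }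
    rewrite pow_inv. apply Rinv_le_contravar; [nra|].
    rewrite mu_eq_1_plus. fold A. eapply Rle_trans; [|apply Rle_pow_lin, Hy].
    assert (INR n * (A * (sin x ^ 2 / 2)) <= INR n * (A * (1 - cos x))).
    { apply Rmult_le_compat_l; [lra|]. apply Rmult_le_compat_l; lra. }
    replace (INR n * A / 2 * sin x ^ 2) with (INR n * (A * (sin x ^ 2 / 2))) by field. lra.
Qed.

(** * Summability of the expansion of s_(k,l) *)

Definition expansion_coef (l : Z) (n : nat) : R := cbinom n * cos_moment n l.

Lemma expansion_coef_bounds l n : 0 <= expansion_coef l n <= 2 * PI.
Proof.
  unfold expansion_coef. pose proof (cbinom_pos n). pose proof (cbinom_le_1 n).
  pose proof (cos_moment_ge_0 n l). pose proof (cos_moment_le n l).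
  split; [apply Rmult_le_pos; lra|].
  rewrite <- (Rmult_1_l (2 * PI)). apply Rmult_le_compat; lra.
Qed.

(* Each of the three factors is [O(1 / sqrt n)]. *)
Lemma expansion_coef_mult_RInt_mu_weight_le xi l n : 0 < xi < 1 -> (1 <= n)%nat ->
  expansion_coef l n * RInt (mu_weight xi n) 0 (2 * PI) <=
  162 * PI ^ 2 / sqrt (/ xi ^ 2 - 1) * / (INR n * sqrt (INR n + 1)).
Proof.
  intros H Hn. unfold expansion_coef.
  pose proof (inv_sqr_sub_1_pos xi H) as HA. set (A := / xi ^ 2 - 1) in *.
  assert (HnR : 1 <= INR n) by (apply le_INR in Hn; simpl in Hn; lra).
  pose proof (cos_moment_le_inv_sqrt n l Hn) as HE.
  pose proof (RInt_mu_weight_le xi n H Hn) as HM. fold A in HM.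
  pose proof (cos_moment_ge_0 n l). pose proof (cbinom_pos n). pose proof (cbinom_le_inv_sqrt n).
  pose proof (RInt_mu_weight_ge_0 xi n H).
  pose proof PI_RGT_0.
  assert (s1 : 0 < sqrt (INR n / 2)) by (apply sqrt_lt_R0; lra).
  assert (s2 : 0 < sqrt (INR n * A / 2)) by (apply sqrt_lt_R0; nra).
  assert (s3 : 0 < sqrt A) by (apply sqrt_lt_R0; lra).
  assert (s4 : 0 < sqrt (INR n + 1)) by (apply sqrt_lt_R0; lra).
  assert (Hprod : sqrt (INR n / 2) * sqrt (INR n * A / 2) = INR n * sqrt A / 2).
  { rewrite <- sqrt_mult_alt by lra.
    replace (INR n / 2 * (INR n * A / 2)) with ((INR n / 2) ^ 2 * A) by field.
    rewrite sqrt_mult_alt, sqrt_pow2 by (try apply pow2_ge_0; lra). field. }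
  apply Rle_trans with
    (/ sqrt (INR n + 1) * (9 * PI / sqrt (INR n / 2)) * (9 * PI / sqrt (INR n * A / 2))).
  - apply Rmult_le_compat; [apply Rmult_le_pos; lra | lra | | lra].
    apply Rmult_le_compat; lra.
  - right. replace (/ sqrt (INR n + 1) * (9 * PI / sqrt (INR n / 2)) * (9 * PI / sqrt (INR n * A / 2)))
      with (81 * PI ^ 2 / (sqrt (INR n + 1) * (sqrt (INR n / 2) * sqrt (INR n * A / 2))))
      by (field; lra).
    rewrite Hprod. field. repeat split; lra.
Qed.

Lemma inv_mult_sqrt_le_telescope m : 1 <= m ->
  / (m * sqrt (m + 1)) <= 4 * (/ sqrt m - / sqrt (m + 1)).
Proof.
  intros Hm.
  assert (Ha : 0 < sqrt m) by (apply sqrt_lt_R0; lra).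
  assert (Hb : 0 < sqrt (m + 1)) by (apply sqrt_lt_R0; lra).
  assert (Ha2 : sqrt m * sqrt m = m) by (apply sqrt_sqrt; lra).
  assert (Hb2 : sqrt (m + 1) * sqrt (m + 1) = m + 1) by (apply sqrt_sqrt; lra).
  set (a := sqrt m) in *. set (b := sqrt (m + 1)) in *.
  assert (Hab : a < b) by nra.
  assert (Hb3 : b <= 3 * a) by nra.
  replace (4 * (/ a - / b)) with (4 / (a * b * (a + b))).
  2:{ replace (/ a - / b) with ((b * b - a * a) / (a * b * (a + b))) by (field; lra).
      rewrite Ha2, Hb2. field. lra. }
  rewrite <- Ha2.
  replace (/ (a * a * b)) with ((a + b) * / (a * a * b * (a + b))) by (field; lra).
  replace (4 / (a * b * (a + b))) with (4 * a * / (a * a * b * (a + b))) by (field; lra).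
  apply Rmult_le_compat_r; [|lra].
  left. apply Rinv_0_lt_compat. repeat apply Rmult_lt_0_compat; lra.
Qed.

Lemma ex_series_expansion_coef_RInt_mu_weight xi l : 0 < xi < 1 ->
  ex_series (fun n => expansion_coef l n * RInt (mu_weight xi n) 0 (2 * PI)).
Proof.
  intros H. apply ex_series_incr_1.
  set (K := 162 * PI ^ 2 / sqrt (/ xi ^ 2 - 1)).
  assert (HK : 0 < K).
  { pose proof PI_RGT_0. pose proof (inv_sqr_sub_1_pos xi H).
    apply Rdiv_lt_0_compat; [nra | apply sqrt_lt_R0; lra]. }
  set (f := fun n : nat => / sqrt (INR n + 1)).
  assert (Hf : forall n, 0 <= f n).
  { intros n. left. apply Rinv_0_lt_compat, sqrt_lt_R0. pose proof (pos_INR n). lra. }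
  set (u := fun n => expansion_coef l (S n) * RInt (mu_weight xi (S n)) 0 (2 * PI)).
  assert (Hu : forall n, u n <= 4 * K * (f n - f (S n))).
  { intros n. eapply Rle_trans; [apply expansion_coef_mult_RInt_mu_weight_le; auto; lia|]. fold K.
    replace (4 * K * (f n - f (S n))) with (K * (4 * (f n - f (S n)))) by ring.
    apply Rmult_le_compat_l; [lra|]. unfold f. rewrite !S_INR.
    apply inv_mult_sqrt_le_telescope. pose proof (pos_INR n). lra. }
  apply (ex_series_bounded_sum u (4 * K * f 0%nat)).
  - intros n. apply Rmult_le_pos; [apply expansion_coef_bounds | now apply RInt_mu_weight_ge_0].
  - assert (Hsum : forall N, sum_n u N <= 4 * K * (f 0%nat - f (S N))).
    { induction N; [rewrite sum_O; apply Hu|]. rewrite sum_n_S. specialize (Hu (S N)). lra. }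
    intros N. specialize (Hsum N). specialize (Hf (S N)). nra.
Qed.

(** * The inner integral *)

Lemma cos_lt_1 t : 0 < t < 2 * PI -> cos t < 1.
Proof.
  intros Ht. destruct (Rle_dec t PI).
  - rewrite <- cos_0. apply cos_decreasing_1; lra.
  - rewrite <- cos_2PI. apply cos_increasing_1; lra.
Qed.

Lemma inv_sqrt_sub_Series m c : 1 < m -> Rabs c <= 1 ->
  / sqrt (m - c) = Series (fun n => cbinom n * (/ m ^ n * / sqrt m) * c ^ n).
Proof.
  intros Hm Hc.
  assert (Hq : Rabs (c / m) < 1).
  { unfold Rdiv. rewrite Rabs_mult, (Rabs_right (/ m)) by (left; apply Rinv_0_lt_compat; lra).
    apply Rle_lt_trans with (1 * / m); [apply Rmult_le_compat_r; [left; apply Rinv_0_lt_compat|]; lra|].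
    rewrite Rmult_1_l, <- Rinv_1. apply Rinv_lt_contravar; lra. }
  rewrite (Series_ext _ (fun n => / sqrt m * (cbinom n * (c / m) ^ n)))
    by (intros; unfold Rdiv; rewrite Rpow_mult_distr, pow_inv; eq_in_R; ring).
  rewrite Series_scal_l. change (Series (fun n => cbinom n * (c / m) ^ n)) with (PSeries cbinom (c / m)).
  rewrite PSeries_cbinom by auto. apply Rabs_def2 in Hq.
  replace (m - c) with (m * (1 - c / m)) by (field; lra).
  rewrite sqrt_mult_alt by lra. rewrite Rinv_mult. reflexivity.
Qed.

Definition inner_int (xi : R) (l : Z) (phi : R) : R :=
  RInt (fun eta => cos (IZR l * eta) / sqrt (mu xi phi - cos eta)) 0 (2 * PI).

Lemma inner_int_Series xi l phi : 0 < xi < 1 -> cos phi < 1 ->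
  inner_int xi l phi = Series (fun n => expansion_coef l n * mu_weight xi n phi).
Proof.
  intros H Hc. pose proof (mu_gt_1 xi phi H Hc) as Hm. pose proof PI_RGT_0.
  destruct (is_RInt_Series
              (fun n eta => cbinom n * mu_weight xi n phi * (cos (IZR l * eta) * cos eta ^ n))
              (fun n => (/ mu xi phi) ^ n) 0 (2 * PI)
              (fun n => cbinom n * mu_weight xi n phi * cos_moment n l))
    as [_ HI]; [lra | | | |].
  - intros n t _. pose proof (cbinom_pos n). pose proof (cbinom_le_1 n).
    pose proof (mu_weight_le_pow xi n phi (mu xi phi) H ltac:(lra)).
    pose proof (Rabs_cos_mult_cos_pow_le l n t).
    rewrite Rabs_mult, Rabs_right by (apply Rle_ge, Rmult_le_pos; lra).
    pose proof (Rabs_pos (cos (IZR l * t) * cos t ^ n)).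
    assert (cbinom n * mu_weight xi n phi <= (/ mu xi phi) ^ n) by nra. nra.
  - eexists. apply is_series_geom.
    rewrite Rabs_right by (left; apply Rinv_0_lt_compat; lra).
    rewrite <- Rinv_1. apply Rinv_lt_contravar; lra.
  - intros n. apply (is_RInt_scal (V := R_NormedModule) (fun t => cos (IZR l * t) * cos t ^ n)).
    apply (RInt_correct (V := R_CompleteNormedModule)), ex_RInt_cos_moment.
  - rewrite (Series_ext _ (fun n => cbinom n * mu_weight xi n phi * cos_moment n l))
      by (intros; unfold expansion_coef; eq_in_R; ring).
    rewrite <- (is_RInt_unique _ _ _ _ HI). apply RInt_ext. intros eta _.
    unfold Rdiv. rewrite inv_sqrt_sub_Series by (auto; apply Rabs_le, COS_bound).
    rewrite <- Series_scal_l. apply Series_ext. intros n. unfold mu_weight. eq_in_R. ring.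
Qed.

Lemma continuous_div_sqrt_mu_sub_cos xi phi (g : R -> R) t : 0 < xi < 1 -> cos phi < 1 ->
  ex_derive g t -> continuous (fun eta => g eta / sqrt (mu xi phi - cos eta)) t.
Proof.
  intros H Hc Hg. pose proof (mu_gt_1 xi phi H Hc). pose proof (COS_bound t).
  apply continuous_of_ex_derive. set (m := mu xi phi) in *.
  assert (0 < sqrt (m + - cos t)) by (apply sqrt_lt_R0; lra).
  auto_derive. repeat split; auto; lra.
Qed.

Lemma is_RInt_inner xi l phi a b : 0 < xi < 1 -> cos phi < 1 ->
  is_RInt (fun eta => a * (cos (IZR l * eta) / sqrt (mu xi phi - cos eta))
                      + b * (sin (IZR l * eta) / sqrt (mu xi phi - cos eta)))
    0 (2 * PI) (a * inner_int xi l phi).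
Proof.
  intros H Hc.
  assert (Hex : forall g : R -> R, (forall t, ex_derive g t) ->
            ex_RInt (fun eta => g eta / sqrt (mu xi phi - cos eta)) 0 (2 * PI)).
  { intros g Hg. apply ex_RInt_of_continuous. intros t.
    apply continuous_div_sqrt_mu_sub_cos; auto. }
  assert (Hsin : RInt (fun eta => sin (IZR l * eta) / sqrt (mu xi phi - cos eta)) 0 (2 * PI) = 0).
  { apply RInt_reflect_odd.
    - apply Hex. intros t. auto_derive. auto.
    - intros t. rewrite sin_IZR_mult_2PI_sub.
      replace (cos (2 * PI - t)) with (cos t) by (rewrite cos_minus, cos_2PI, sin_2PI; ring).
      unfold Rdiv. eq_in_R. ring. }
  replace (a * inner_int xi l phi) with (a * inner_int xi l phi
    + b * RInt (fun eta => sin (IZR l * eta) / sqrt (mu xi phi - cos eta)) 0 (2 * PI))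
    by (rewrite Hsin; ring).
  apply is_RInt_lin2; apply (RInt_correct (V := R_CompleteNormedModule)), Hex;
    intros t; auto_derive; auto.
Qed.

Lemma is_RInt_Riemann (f : R -> R) a b v : is_RInt f a b v -> Defs.is_RInt f a b v.
Proof.
  intros H. assert (He : ex_RInt f a b) by (now exists v).
  exists (ex_RInt_Reals_0 _ _ _ He). rewrite <- RInt_Reals. now apply is_RInt_unique.
Qed.

Lemma is_RInt_integrand_re k l xi phi : 0 < xi < 1 -> cos phi < 1 ->
  Defs.is_RInt (integrand_re k l xi phi) 0 (2 * PI) (cos (IZR k * phi) * inner_int xi l phi).
Proof.
  intros H Hc. apply is_RInt_Riemann.
  eapply is_RInt_ext; [|apply (is_RInt_inner xi l phi _ (- sin (IZR k * phi)) H Hc)].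
  intros x _. unfold integrand_re. rewrite cos_plus. unfold Rdiv. eq_in_R. ring.
Qed.

Lemma is_RInt_integrand_im k l xi phi : 0 < xi < 1 -> cos phi < 1 ->
  Defs.is_RInt (integrand_im k l xi phi) 0 (2 * PI) (- sin (IZR k * phi) * inner_int xi l phi).
Proof.
  intros H Hc. apply is_RInt_Riemann.
  eapply is_RInt_ext; [|apply (is_RInt_inner xi l phi _ (- cos (IZR k * phi)) H Hc)].
  intros x _. unfold integrand_im. rewrite sin_plus. unfold Rdiv. eq_in_R. ring.
Qed.

(** * The outer integral *)

Lemma mu_ge_min_ends xi a b phi :
  0 < xi < 1 -> 0 < a < PI -> PI < b < 2 * PI -> a <= phi <= b ->
  Rmin (mu xi a) (mu xi b) <= mu xi phi.
Proof.
  intros H Ha Hb Hphi. pose proof (inv_sqr_sub_1_pos xi H). rewrite !mu_eq_1_plus.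
  destruct (Rle_dec phi PI).
  - assert (cos phi <= cos a) by (apply cos_decr_1; lra).
    eapply Rle_trans; [apply Rmin_l | nra].
  - assert (cos phi <= cos b) by (apply cos_incr_1; lra).
    eapply Rle_trans; [apply Rmin_r | nra].
Qed.

Lemma Rabs_mult_mu_weight_le (T : R -> R) xi n t : 0 < xi < 1 -> Rabs (T t) <= 1 ->
  Rabs (T t * mu_weight xi n t) <= mu_weight xi n t.
Proof.
  intros H HT. pose proof (mu_weight_bounds xi n t H).
  rewrite Rabs_mult, (Rabs_right (mu_weight xi n t)) by lra.
  rewrite <- (Rmult_1_l (mu_weight xi n t)) at 2. apply Rmult_le_compat_r; lra.
Qed.

(* On [a, b], away from the singularity at [phi = 0], the expansion of the inner
   integral converges geometrically and may be integrated termwise. *)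
Lemma is_RInt_outer_Series xi l (T : R -> R) a b :
  0 < xi < 1 -> 0 < a < PI -> PI < b < 2 * PI ->
  (forall t, continuous T t) -> (forall t, Rabs (T t) <= 1) ->
  ex_series (fun n => expansion_coef l n * RInt (fun phi => T phi * mu_weight xi n phi) a b) /\
  is_RInt (fun phi => T phi * inner_int xi l phi) a b
    (Series (fun n => expansion_coef l n * RInt (fun phi => T phi * mu_weight xi n phi) a b)).
Proof.
  intros H Ha Hb HTc HTb. pose proof PI_RGT_0.
  set (m0 := Rmin (mu xi a) (mu xi b)).
  assert (Hm0 : 1 < m0) by (apply Rmin_glb_lt; apply mu_gt_1, cos_lt_1; auto; lra).
  destruct (is_RInt_Series (fun n phi => expansion_coef l n * (T phi * mu_weight xi n phi))
              (fun n => 2 * PI * (/ m0) ^ n) a b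
              (fun n => expansion_coef l n * RInt (fun phi => T phi * mu_weight xi n phi) a b))
    as [HS HI]; [lra | | | |].
  - intros n t Ht. pose proof (mu_ge_min_ends xi a b t H Ha Hb Ht) as Hmt. fold m0 in Hmt.
    pose proof (expansion_coef_bounds l n). pose proof (mu_weight_le_pow xi n t m0 H ltac:(lra)).
    pose proof (Rabs_mult_mu_weight_le T xi n t H (HTb t)) as HTw.
    rewrite Rabs_mult, (Rabs_right (expansion_coef l n)) by lra.
    apply Rmult_le_compat; try apply Rabs_pos; lra.
  - apply ex_series_scal_l_R. eexists. apply is_series_geom.
    rewrite Rabs_right by (left; apply Rinv_0_lt_compat; lra).
    rewrite <- Rinv_1. apply Rinv_lt_contravar; lra.
  - intros n. apply (is_RInt_scal (V := R_NormedModule)).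
    apply (RInt_correct (V := R_CompleteNormedModule)), ex_RInt_of_continuous. intros z.
    apply continuous_mult_R; [apply HTc | now apply continuous_mu_weight].
  - split; [exact HS|]. eapply is_RInt_ext; [|exact HI]. intros x Hx.
    rewrite Rmin_left, Rmax_right in Hx by lra.
    rewrite inner_int_Series by (auto; apply cos_lt_1; lra).
    rewrite <- Series_scal_l. apply Series_ext. intros n. eq_in_R. ring.
Qed.

Lemma ex_series_outer xi l (T : R -> R) :
  0 < xi < 1 -> (forall t, continuous T t) -> (forall t, Rabs (T t) <= 1) ->
  ex_series (fun n => expansion_coef l n * RInt (fun phi => T phi * mu_weight xi n phi) 0 (2 * PI)).
Proof.
  intros H HTc HTb.
  apply (ex_series_le (V := R_CompleteNormedModule) _
           (fun n => expansion_coef l n * RInt (mu_weight xi n) 0 (2 * PI)));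
    [| now apply ex_series_expansion_coef_RInt_mu_weight].
  intros n. change (norm ?x) with (Rabs x). pose proof (expansion_coef_bounds l n).
  rewrite Rabs_mult, (Rabs_right (expansion_coef l n)) by lra.
  apply Rmult_le_compat_l; [lra|].
  pose proof PI_RGT_0. apply Rabs_RInt_le_RInt; [lra | | |].
  - intros t. apply continuous_mult_R; [apply HTc | now apply continuous_mu_weight].
  - intros t. now apply continuous_mu_weight.
  - intros t. now apply Rabs_mult_mu_weight_le.
Qed.

Lemma iter_int_Series xi l (T : R -> R) (f : R -> R -> R) :
  0 < xi < 1 -> (forall t, continuous T t) -> (forall t, Rabs (T t) <= 1) ->
  (forall phi, 0 < phi < 2 * PI -> Defs.is_RInt (f phi) 0 (2 * PI) (T phi * inner_int xi l phi)) ->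
  iter_int f (Series (fun n => expansion_coef l n *
                               RInt (fun phi => T phi * mu_weight xi n phi) 0 (2 * PI))).
Proof.
  intros H HTc HTb Hf. pose proof PI_RGT_0.
  exists (fun phi => T phi * inner_int xi l phi). split; [exact Hf|].
  intros eps Heps.
  destruct (Series_weighted_near (R * R) (fun p => 0 < fst p < PI /\ PI < snd p < 2 * PI)
              (fun p => fst p + (2 * PI - snd p)) (expansion_coef l)
              (fun n => RInt (mu_weight xi n) 0 (2 * PI))
              (fun n => RInt (fun phi => T phi * mu_weight xi n phi) 0 (2 * PI))
              (fun p n => RInt (fun phi => T phi * mu_weight xi n phi) (fst p) (snd p)))
    with (eps := eps) as [delta [Hdelta Hnear]]; auto.
  - intros n. apply expansion_coef_bounds.
  - now apply ex_series_expansion_coef_RInt_mu_weight.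
  - now apply ex_series_outer.
  - intros [a b] n [Ha Hb]; simpl in *. apply Rabs_RInt_sub_le; try lra.
    + intros t. apply continuous_mult_R; [apply HTc | now apply continuous_mu_weight].
    + intros t. now apply continuous_mu_weight.
    + intros t. now apply Rabs_mult_mu_weight_le.
    + intros t. pose proof (mu_weight_bounds xi n t H). lra.
  - intros [a b] [Ha Hb]; simpl in *. now apply is_RInt_outer_Series.
  - exists (Rmin (delta / 2) PI). split; [apply Rmin_glb_lt; lra|]. intros a b Ha Hb.
    pose proof (Rmin_l (delta / 2) PI). pose proof (Rmin_r (delta / 2) PI).
    assert (Ha' : 0 < a < PI) by lra. assert (Hb' : PI < b < 2 * PI) by lra.
    destruct (is_RInt_outer_Series xi l T a b H Ha' Hb' HTc HTb) as [_ HI].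
    eexists. split; [apply is_RInt_Riemann, HI|]. apply (Hnear (a, b)); simpl; lra.
Qed.

Lemma Series_outer_cos_gt_0 xi k l : 0 < xi < 1 ->
  0 < Series (fun n => expansion_coef l n *
                       RInt (fun phi => cos (IZR k * phi) * mu_weight xi n phi) 0 (2 * PI)).
Proof.
  intros H.
  assert (Hterm : forall n, 0 < RInt (fun phi => cos (IZR k * phi) * mu_weight xi n phi) 0 (2 * PI))
    by (intros; now apply RInt_cos_mu_weight_gt_0).
  apply Rlt_le_trans with
    (expansion_coef l (Z.abs_nat l) *
     RInt (fun phi => cos (IZR k * phi) * mu_weight xi (Z.abs_nat l) phi) 0 (2 * PI)).
  - apply Rmult_lt_0_compat; [|apply Hterm].
    apply Rmult_lt_0_compat; [apply cbinom_pos | apply cos_moment_abs_gt_0].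
  - apply (Series_ge_term (fun n => expansion_coef l n *
             RInt (fun phi => cos (IZR k * phi) * mu_weight xi n phi) 0 (2 * PI))).
    + intros n. pose proof (expansion_coef_bounds l n). pose proof (Hterm n).
      apply Rmult_le_pos; lra.
    + apply ex_series_outer; auto.
      * intros t. apply continuous_of_ex_derive. auto_derive. auto.
      * intros t. apply Rabs_le, COS_bound.
Qed.

(* [phi -> - sin (k phi) mu(phi)^(-n-1/2)] is odd about [phi = PI]. *)
Lemma Series_outer_sin_0 xi k l : 0 < xi < 1 ->
  Series (fun n => expansion_coef l n *
                   RInt (fun phi => - sin (IZR k * phi) * mu_weight xi n phi) 0 (2 * PI)) = 0.
Proof.
  intros H. rewrite (Series_ext _ (fun n => 0 * expansion_coef l n)).
  - rewrite Series_scal_l. ring.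
  - intros n. rewrite RInt_reflect_odd; [eq_in_R; ring | |].
    + apply ex_RInt_of_continuous. intros z. apply continuous_mult_R; [|now apply continuous_mu_weight].
      apply continuous_of_ex_derive. auto_derive. auto.
    + intros t. rewrite sin_IZR_mult_2PI_sub, mu_weight_reflect. ring.
Qed.

Theorem mainTheorem5 (k l : Z) (xi : R) (Hxi : 0 < xi < 1) :
  exists re : R,
    iter_int (integrand_re k l xi) re /\ 0 < re /\
    iter_int (integrand_im k l xi) 0.
Proof.
  exists (Series (fun n => expansion_coef l n *
                           RInt (fun phi => cos (IZR k * phi) * mu_weight xi n phi) 0 (2 * PI))).
  split; [|split].
  - apply iter_int_Series; auto.
    + intros t. apply continuous_of_ex_derive. auto_derive. auto.
    + intros t. apply Rabs_le, COS_bound.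
    + intros phi Hphi. apply is_RInt_integrand_re; auto. now apply cos_lt_1.
  - now apply Series_outer_cos_gt_0.
  - rewrite <- (Series_outer_sin_0 xi k l Hxi). apply iter_int_Series; auto.
    + intros t. apply continuous_of_ex_derive. auto_derive. auto.
    + intros t. rewrite Rabs_Ropp. apply Rabs_le, SIN_bound.
    + intros phi Hphi. apply is_RInt_integrand_im; auto. now apply cos_lt_1.
Qed.
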